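(* Let $S\ge 1$ be an integer, let $Q_{\boldsymbol{X}}$ be a probability distribution on a covariate space $\mathcal{X}$, and let $\tau^{(1)},\ldots,\tau^{(S)}\in L_2(Q_{\boldsymbol{X}})$. Let $\mathcal{F}\subset L_2(Q_{\boldsymbol{X}})$ be a model class that contains the convex hull of $\{\tau^{(1)},\ldots,\tau^{(S)}\}$. Consider the minimax problem \[ f_{\text{regret}}^*=\underset{f\in\mathcal{F}}{\arg\min}\ \max_{Q\in\mathcal{C}(Q_{\boldsymbol{X}})}\ \mathbb{E}_{Q_{\boldsymbol{X}}}\big[(f(\boldsymbol{X})-\tau_Q(\boldsymbol{X}))^2\big]. \] This problem can be equivalently expressed as \[ \{f_{\text{regret}}^*, R^*\}=\underset{f\in\mathcal{F},\,R\in\mathbb{R}}{\arg\min}\ R\quad\text{subject to}\quad \mathbb{E}_{Q_{\boldsymbol{X}}}\big[(f(\boldsymbol{X})-\tau^{(s)}(\boldsymbol{X}))^2\big]\le R\ \text{ for all } s\in\{1,\ldots,S\}, \] where $R^*$ denotes the smallest worst-case value achieved by $f_{\text{regret}}^*$. Furthermore, the solution $\{f_{\text{regret}}^*,R^*\}$ exists and there exist $q_1^*,\ldots,q_S^*$ such that \[ f_{\text{regret}}^*(\cdot)=\sum_{s=1}^S q_s^*\,\tau^{(s)}(\cdot), \] \[ q_s^*\Big(\mathbb{E}_{Q_{\boldsymbol{X}}}\big[(f_{\text{regret}}^*(\boldsymbol{X})-\tau^{(s)}(\boldsymbol{X}))^2\big]-R^*\Big)=0\quad\text{for all } s, \] \[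 \mathbb{E}_{Q_{\boldsymbol{X}}}\big[(f_{\text{regret}}^*(\boldsymbol{X})-\tau^{(s)}(\boldsymbol{X}))^2\big]\le R^*\quad\text{for all } s, \] \[ \sum_{s=1}^S q_s^*=1,\qquad q_s^*\ge 0\ \text{ for all } s. \]
   Context: Setting: there are $S$ source sites; site $s$ has a joint distribution $P^{(s)}$ of potential outcomes $(Y(1),Y(0))$ and covariates $\boldsymbol{X}\in\mathcal{X}$, with site-specific conditional average treatment effect (CATE) $\tau^{(s)}(\boldsymbol{x})=\mathbb{E}_{P^{(s)}}[Y(1)-Y(0)\mid \boldsymbol{X}=\boldsymbol{x}]$. For a joint distribution $Q$ of $(Y(1),Y(0),\boldsymbol{X})$, $\tau_Q(\boldsymbol{x})=\mathbb{E}_Q[Y(1)-Y(0)\mid\boldsymbol{X}=\boldsymbol{x}]$. $\Delta_{S-1}=\{\boldsymbol{q}\in\mathbb{R}^S:\sum_s q_s=1,\ \min_s q_s\ge 0\}$. The multisite uncertainty set is $\mathcal{C}(Q_{\boldsymbol{X}})=\{Q=(Q_{\boldsymbol{X}},Q_{(Y(1),Y(0))\mid\boldsymbol{X}}):\ \tau_Q(\cdot)=\sum_{s=1}^S q_s\tau^{(s)}(\cdot)\text{ for some }\boldsymbol{q}\in\Delta_{S-1}\}$, i.e. all joint distributions with covariate marginal $Q_{\boldsymbol{X}}$ whose CATE is a convex combination of the site CATEs. $L_2(Q_{\boldsymbol{X}})$ is the space of square-integrable measurable functions with respect to $Q_{\boldsymbol{X}}$. *)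

From HB Require Import structures.
From mathcomp Require Import all_boot all_order all_algebra.
From mathcomp Require Import all_classical all_reals all_analysis.
Set Implicit Arguments. Unset Strict Implicit. Unset Printing Implicit Defensive.
Import Order.TTheory GRing.Theory Num.Theory.
Local Open Scope classical_set_scope.
Local Open Scope ring_scope.

Section Defs.
Context (d : measure_display) (T : measurableType d) (R : realType)
        (P : probability T R).

Definition memL2 (g : T -> R) : Prop :=
  measurable_fun [set: T] g /\ P.-integrable [set: T] (fun x => ((g x) ^+ 2)%:E).

Definition simplex (S : nat) (q : 'I_S -> R) : Prop :=
  (forall s, 0 <= q s) /\ \sum_(s < S) q s = 1.

Definition combo (S : nat) (tau : 'I_S -> T -> R) (q : 'I_S -> R) : T -> R :=
  fun x => \sum_(s < S) q s * tau s x.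

Definition mse (f t : T -> R) : \bar R :=
  (\int[P]_x (((f x - t x) ^+ 2)%:E))%E.

(* The set of CATE functions tau_Q for Q in the multisite uncertainty set
   C(Q_X): the convex combinations of the site CATEs. *)
Definition cate_set (S : nat) (tau : 'I_S -> T -> R) : set (T -> R) :=
  [set combo tau q | q in simplex (S:=S)].

Definition worst_risk (S : nat) (tau : 'I_S -> T -> R) (f : T -> R) : \bar R :=
  ereal_sup [set mse f t | t in cate_set tau].

Definition minimax_sol (S : nat) (tau : 'I_S -> T -> R) (F : set (T -> R))
    (f : T -> R) : Prop :=
  F f /\ forall g, F g -> (worst_risk tau f <= worst_risk tau g)%E.

Definition feasible (S : nat) (tau : 'I_S -> T -> R) (F : set (T -> R))
    (f : T -> R) (r : R) : Prop :=
  F f /\ forall s, (mse f (tau s) <= r%:E)%E.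

Definition constr_sol (S : nat) (tau : 'I_S -> T -> R) (F : set (T -> R))
    (f : T -> R) (r : R) : Prop :=
  feasible tau F f r /\ forall g r', feasible tau F g r' -> r <= r'.

End Defs.

(* For weights q in the simplex write f_q := \sum_s q_s tau_s.  The
   bias-variance identity
     \sum_s q_s E(g - tau_s)^2 = E(g - f_q)^2 + \sum_s q_s E(f_q - tau_s)^2
   shows that the risk of g against a mixture of the sites never exceeds its
   worst risk against a single site, so the inner maximum is a maximum over
   the sites and the minimax problem is the epigraph problem.  The last sum,
   D(q), is the Lagrange dual of the epigraph problem; it is a quadratic
   polynomial in q, so it attains its maximum on the simplex at some p.
   Moving a little mass away from a site s with p_s > 0 cannot increase D,
   which forces every such site to have the largest risk R_p against f_p
   (complementary slackness).  For any feasible (g, R) the identity then gives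
   E(g - f_p)^2 + R_p <= R: hence (f_p, R_p) is optimal, and every optimal f
   equals f_p almost everywhere. *)

From HB Require Import structures.
From mathcomp Require Import all_boot all_order all_algebra.
From mathcomp Require Import all_classical all_reals all_analysis.
From mathcomp Require Import ring lra.
From mathcomp Require Import measurable_realfun matrix_normedtype.
Import Order.TTheory GRing.Theory Num.Theory.
Import numFieldNormedType.Exports.
Set Implicit Arguments. Unset Strict Implicit. Unset Printing Implicit Defensive.
Local Open Scope classical_set_scope.
Local Open Scope ring_scope.

Section weights.
Variables (R : comPzRingType) (S : nat).
Implicit Types (q a : 'I_S -> R) (s t : 'I_S).

Lemma sum_delta_mul a t : \sum_i (i == t)%:R * a i = a t.
Proof.
by rewrite (bigD1 t) //= eqxx mul1r big1 ?addr0 // => i /negbTE ->; rewrite mul0r.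
Qed.

Definition move_mass q (e : R) s t : 'I_S -> R :=
  fun i => q i + e * ((i == t)%:R - (i == s)%:R).

Lemma sum_move_mass_mul q e s t a :
  \sum_i move_mass q e s t i * a i = \sum_i q i * a i + e * (a t - a s).
Proof.
under eq_bigr do rewrite mulrDl.
rewrite big_split /= -(sum_delta_mul a t) -(sum_delta_mul a s) mulrBr !mulr_sumr.
by rewrite -sumrB; congr (_ + _); apply: eq_bigr => i _; ring.
Qed.

Lemma bias_variance_sum q a (y : R) : \sum_s q s = 1 ->
  \sum_s q s * (y - a s) ^+ 2 =
  (y - \sum_s q s * a s) ^+ 2 + \sum_s q s * (\sum_u q u * a u - a s) ^+ 2.
Proof.
move=> q1; set m := \sum_u q u * a u.
have e s : q s * (y - a s) ^+ 2 = q s * (y - m) ^+ 2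
   + 2 * (y - m) * (q s * m - q s * a s) + q s * (m - a s) ^+ 2 by ring.
rewrite (eq_bigr _ (fun s _ => e s)) !big_split /= -mulr_suml q1 mul1r.
by rewrite -mulr_sumr sumrB -mulr_suml q1 mul1r subrr mulr0 addr0.
Qed.

End weights.

Section simplex.
Variables (R : realType) (S : nat).
Implicit Types (q : 'I_S -> R) (s t : 'I_S).

Lemma simplex_delta t : simplex (fun i : 'I_S => (i == t)%:R : R).
Proof.
split=> [i|]; first exact: ler0n.
by rewrite -[RHS](sum_delta_mul (fun=> 1) t); apply: eq_bigr => i _; rewrite mulr1.
Qed.

Lemma simplex_move_mass q e s t : simplex q -> 0 <= e -> e <= q s ->
  simplex (move_mass q e s t).
Proof.
move=> [q0 q1] e0 es; split=> [i|].
  rewrite /move_mass; have := q0 i; case: (i == t);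
    case: (eqVneq i s) => [->|_] /=; rewrite ?eqxx /=; lra.
rewrite -(eq_bigr _ (fun i _ => mulr1 (move_mass q e s t i))) sum_move_mass_mul.
by rewrite subrr mulr0 addr0 (eq_bigr _ (fun i _ => mulr1 (q i))).
Qed.

Lemma simplex_exists_pos q : simplex q -> exists s, 0 < q s.
Proof.
move=> [q0 q1]; apply: contrapT => /forallNP qn.
suff : \sum_s q s <= 0 by rewrite q1 ler10.
by apply: sumr_le0 => s _; rewrite leNgt; apply/negP/qn.
Qed.

Lemma simplex_slack_sum q (D : 'I_S -> R) (r : R) :
  simplex q -> (forall s, q s * (D s - r) = 0) -> \sum_s q s * D s = r.
Proof.
move=> [_ q1] slack; have qD s : q s * D s = q s * r + q s * (D s - r) by ring.
by rewrite (eq_bigr _ (fun s _ => qD s)) big_split /= -mulr_suml q1 mul1r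
  big1 ?addr0 // => s _; rewrite slack.
Qed.

End simplex.

Lemma continuous_sum (K : numFieldType) (T : topologicalType) (I : Type)
    (r : seq I) (h : I -> T -> K) :
  (forall i, continuous (h i)) -> continuous (fun x => \sum_(i <- r) h i x).
Proof.
move=> hc; elim: r => [|i r IH].
  under eq_fun do rewrite big_nil.
  exact: cst_continuous.
under eq_fun do rewrite big_cons.
by move=> x; apply: cvgD; [exact: hc | exact: IH].
Qed.

Section simplex_argmax.
Variables (R : realType) (S : nat).

Definition simplex_rV : set 'rV[R]_S := [set v | simplex (fun i => v ord0 i)].

Lemma simplex_rV_compact : compact simplex_rV.
Proof.
have coord i : continuous (fun v : 'rV[R]_S => v ord0 i) by exact: coord_continuous.
have closed_simplex : closed simplex_rV.
  rewrite (_ : simplex_rV =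
      \bigcap_i ((fun v => v ord0 i) @^-1` [set x | 0 <= x]) `&`
      (fun v => \sum_i v ord0 i) @^-1` [set 1]).
    apply: closedI.
      apply: closed_bigI => i _.
      by apply: preimage_closed; [move=> v _; exact: coord | exact: closed_ge].
    apply: preimage_closed; last exact: closed_eq.
    by move=> v _; exact: continuous_sum.
  apply/seteqP; split=> v [v0 v1]; split=> //; first by move=> i _; exact: v0.
  by move=> i; exact: v0.
apply: subclosed_compact closed_simplex
  (rV_compact (fun _ => @segment_compact R 0 1)) _.
move=> v [v0 v1] i /=; rewrite in_itv /= v0 -v1 (bigD1 i) //= lerDl.
by apply: sumr_ge0 => j _.
Qed.

Lemma simplex_argmax (h : ('I_S -> R) -> R) : (0 < S)%N ->
  continuous (fun v : 'rV[R]_S => h (fun i => v ord0 i)) ->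
  exists2 q, simplex q & forall p, simplex p -> h p <= h q.
Proof.
move=> S0 hc; have simplex_rV0 : simplex_rV !=set0.
  exists (\row_i S%:R^-1); split=> [i|]; first by rewrite mxE invr_ge0 ler0n.
  under eq_bigr do rewrite mxE.
  by rewrite sumr_const card_ord -[_ *+ S]mulr_natr mulVf // pnatr_eq0 -lt0n.
have [c] := EVT_max_rV simplex_rV0 simplex_rV_compact (continuous_subspaceT hc).
rewrite inE => hc_simplex cmax; exists (fun i => c ord0 i) => // p hp.
have -> : p = (fun i => (\row_j p j) ord0 i) by apply/funext => i; rewrite mxE.
by apply: cmax; rewrite inE /simplex_rV /=; under eq_fun do rewrite mxE.
Qed.

End simplex_argmax.

Lemma epigraph_argminE (X : Type) (R : realType) (F : set X) (W : X -> \bar R)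
    f (r : R) : (forall g, F g -> W g \is a fin_num) ->
  ((F f /\ (W f <= r%:E)%E) /\ (forall g r', F g /\ (W g <= r'%:E)%E -> r <= r'))
  <-> ((F f /\ forall g, F g -> (W f <= W g)%E) /\ W f = r%:E).
Proof.
move=> Wfin; split=> [[[Ff Wfr] rmin] | [[Ff Wmin] Wfr]].
  have W_ge g : F g -> (r%:E <= W g)%E.
    move=> Fg; rewrite -(fineK (Wfin g Fg)) lee_fin; apply: (rmin g).
    by split=> //; rewrite fineK ?Wfin.
  have Wf : W f = r%:E by apply/le_anti; rewrite Wfr W_ge.
  by split=> //; split=> // g Fg; rewrite Wf W_ge.
split; first by rewrite Wfr.
by move=> g r' [Fg Wgr]; rewrite -lee_fin -Wfr (le_trans (Wmin g Fg)).
Qed.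

Section L2.
Context {d : measure_display} {T : measurableType d} {R : realType}
        (P : probability T R).
Implicit Types f g h : T -> R.

Lemma memL2_cst (c : R) : memL2 P (fun=> c).
Proof.
split; first exact: measurable_cst.
exact: finite_measure_integrable_cst.
Qed.

Lemma memL2Z (c : R) f : memL2 P f -> memL2 P (fun x => c * f x).
Proof.
move=> [mf f2]; split; first exact: measurable_funM.
under eq_fun do rewrite exprMn EFinM.
exact: integrableZl.
Qed.

Lemma memL2D f g : memL2 P f -> memL2 P g -> memL2 P (fun x => f x + g x).
Proof.
move=> [mf f2] [mg g2]; split; first exact: measurable_funD.
apply: (le_integrable measurableT _ _ (integrableD measurableT
  (integrableZl measurableT 2 f2) (integrableZl measurableT 2 g2))).
  by apply: measurableT_comp => //; apply: measurable_funX; exact: measurable_funD.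
move=> x _ /=; rewrite lee_fin ger0_norm ?sqr_ge0 //.
have := sqr_ge0 (f x - g x); have := sqr_ge0 (f x); have := sqr_ge0 (g x).
by rewrite ger0_norm; nra.
Qed.

Lemma memL2B f g : memL2 P f -> memL2 P g -> memL2 P (fun x => f x - g x).
Proof.
move=> hf /(memL2Z (-1)) hg.
have -> : (fun x => f x - g x) = (fun x => f x + - 1 * g x).
  by apply/funext => x; rewrite mulN1r.
exact: memL2D.
Qed.

Lemma memL2_sum (I : Type) (r : seq I) (F : I -> T -> R) :
  (forall i, memL2 P (F i)) -> memL2 P (fun x => \sum_(i <- r) F i x).
Proof.
move=> hF; elim: r => [|i r IH].
  under eq_fun do rewrite big_nil.
  exact: memL2_cst.
under eq_fun do rewrite big_cons.
exact: memL2D.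
Qed.

Lemma memL2_combo (S : nat) (tau : 'I_S -> T -> R) q :
  (forall s, memL2 P (tau s)) -> memL2 P (combo tau q).
Proof. by move=> htau; apply: memL2_sum => s; exact: memL2Z. Qed.

Lemma integrable_mulL2 f g : memL2 P f -> memL2 P g ->
  P.-integrable setT (fun x => (f x * g x)%:E).
Proof.
move=> [mf f2] [mg g2].
apply: (le_integrable measurableT _ _ (integrableD measurableT f2 g2)).
  by apply: measurableT_comp => //; exact: measurable_funM.
move=> x _ /=; rewrite lee_fin [X in _ <= X]ger0_norm ?addr_ge0 ?sqr_ge0 //.
have := sqr_ge0 (f x - g x); have := sqr_ge0 (f x + g x).
by rewrite ler_norml => *; apply/andP; split; nra.
Qed.

Lemma measurable_sqrB f g : measurable_fun setT f -> measurable_fun setT g ->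
  measurable_fun setT (fun x => ((f x - g x) ^+ 2)%:E).
Proof.
by move=> mf mg; apply: measurableT_comp => //; apply: measurable_funX;
  exact: measurable_funB.
Qed.

Lemma mse_ge0 f g : (0 <= mse P f g)%E.
Proof. by apply: integral_ge0 => x _; rewrite lee_fin sqr_ge0. Qed.

Lemma mse_fin_num f g : memL2 P f -> memL2 P g -> mse P f g \is a fin_num.
Proof. by move=> hf hg; apply: integrable_fin_num => //; case: (memL2B hf hg). Qed.

(* [fine] maps +oo to 0: [mseR] is meaningful only for arguments in L2. *)
Definition mseR f g : R := fine (mse P f g).

Lemma mseE f g : memL2 P f -> memL2 P g -> mse P f g = (mseR f g)%:E.
Proof. by move=> hf hg; rewrite fineK // mse_fin_num. Qed.

Lemma mseR_ge0 f g : 0 <= mseR f g.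
Proof. exact/fine_ge0/mse_ge0. Qed.

Lemma mse_eq0_ae f g : measurable_fun setT f -> measurable_fun setT g ->
  mse P f g = 0%E -> {ae P, forall x, f x = g x}.
Proof.
move=> mf mg mse0.
have : ae_eq P setT (fun x => ((f x - g x) ^+ 2)%:E) (cst 0%E).
  apply/(ae_eq_integral_abs P measurableT (measurable_sqrB mf mg)).
  by rewrite -mse0; apply: eq_integral => x _; rewrite gee0_abs // lee_fin sqr_ge0.
apply: filterS => x /(_ I) /eqP.
by rewrite eqe sqrf_eq0 subr_eq0 => /eqP.
Qed.

Lemma mse_ae_eql f g h : measurable_fun setT f -> measurable_fun setT g ->
  measurable_fun setT h -> {ae P, forall x, f x = g x} -> mse P f h = mse P g h.
Proof.
move=> mf mg mh fg; apply: ae_eq_integral => //; try exact: measurable_sqrB.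
by apply: filterS fg => x fgx _; rewrite fgx.
Qed.

End L2.

Section mixture.
Context {d : measure_display} {T : measurableType d} {R : realType}
        (P : probability T R) (S : nat) (tau : 'I_S -> T -> R).
Hypothesis mtau : forall s, measurable_fun setT (tau s).

Lemma measurable_combo q : measurable_fun setT (combo tau q).
Proof. by apply: measurable_sum => s; exact: measurable_funM. Qed.

Lemma sum_mse_weighted q f : (forall s, 0 <= q s) -> measurable_fun setT f ->
  (\sum_s (q s)%:E * mse P f (tau s) =
   \int[P]_x (\sum_s q s * (f x - tau s x) ^+ 2)%:E)%E.
Proof.
move=> q0 mf; under eq_integral do rewrite -sumEFin.
rewrite ge0_integral_sum //; last 2 first.
- by move=> s; under eq_fun do rewrite EFinM; exact/measurable_funeM/measurable_sqrB.
- by move=> s x _; rewrite lee_fin mulr_ge0 ?sqr_ge0.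
apply: eq_bigr => s _; under eq_integral do rewrite EFinM.
rewrite ge0_integralZl_EFin //; first by move=> x _; rewrite lee_fin sqr_ge0.
exact: measurable_sqrB.
Qed.

Lemma mse_mixture q f : simplex q -> measurable_fun setT f ->
  (\sum_s (q s)%:E * mse P f (tau s) =
   mse P f (combo tau q) + \sum_s (q s)%:E * mse P (combo tau q) (tau s))%E.
Proof.
move=> [q0 q1] mf; have mq := measurable_combo q.
rewrite !sum_mse_weighted // /mse -ge0_integralD //; last first.
- by apply: measurableT_comp => //; apply: measurable_sum => s;
    apply: measurable_funM => //; exact: measurable_funX (measurable_funB _ _).
- by move=> x _; rewrite lee_fin sumr_ge0 // => s _; rewrite mulr_ge0 ?sqr_ge0.
- exact: measurable_sqrB.
- by move=> x _; rewrite lee_fin sqr_ge0.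
by apply: eq_integral => x _; rewrite -EFinD bias_variance_sum.
Qed.

Lemma combo_delta s : combo tau (fun i => (i == s)%:R) = tau s.
Proof. by apply/funext => x; rewrite /combo sum_delta_mul. Qed.

Lemma mse_le_worst_risk f s : (mse P f (tau s) <= worst_risk P tau f)%E.
Proof.
apply: ereal_sup_ubound; exists (tau s) => //.
by rewrite -combo_delta; exists (fun i => (i == s)%:R) => //; exact: simplex_delta.
Qed.

Lemma worst_riskE f : measurable_fun setT f ->
  worst_risk P tau f = (\big[Order.max/-oo]_(s < S) mse P f (tau s))%E.
Proof.
move=> mf; apply/le_anti/andP; split; last first.
  by apply: bigmax_le => [|s _]; [exact: leNye | exact: mse_le_worst_risk].
apply: ge_ereal_sup => _ [_ [q hq <-] <-]; have [q0 q1] := hq.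
set M := (\big[Order.max/-oo]_(s < S) mse P f (tau s))%E.
apply: (@le_trans _ _ (\sum_s (q s)%:E * mse P f (tau s))%E).
  rewrite mse_mixture // leeDl // sume_ge0 // => s _.
  by rewrite mule_ge0 ?lee_fin ?mse_ge0.
apply: (@le_trans _ _ (\sum_s (q s)%:E * M)%E).
  by apply: lee_sum => s _; rewrite lee_wpmul2l ?lee_fin //; exact: le_bigmax.
rewrite -ge0_sume_distrl; last by move=> s _; rewrite lee_fin.
by rewrite sumEFin q1 mul1e.
Qed.

Lemma worst_risk_leP f (r : \bar R) : measurable_fun setT f ->
  (worst_risk P tau f <= r)%E <-> forall s, (mse P f (tau s) <= r)%E.
Proof.
move=> mf; split=> [wr s|le_r]; first exact: le_trans (mse_le_worst_risk f s) wr.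
by rewrite worst_riskE //; apply: bigmax_le => //; exact: leNye.
Qed.

Lemma worst_risk_fin_num f : (0 < S)%N -> (forall s, memL2 P (tau s)) ->
  memL2 P f -> worst_risk P tau f \is a fin_num.
Proof.
move=> S0 htau [mf f2]; rewrite worst_riskE //.
have [s _ ->] := eq_bigmax (Ordinal S0) xpredT (fun s => mse P f (tau s)) isT
  (fun s _ => leNye _).
exact: mse_fin_num.
Qed.

Lemma constr_solE F f r : (0 < S)%N -> (forall s, memL2 P (tau s)) ->
  (forall g, F g -> memL2 P g) ->
  constr_sol P tau F f r <-> minimax_sol P tau F f /\ worst_risk P tau f = r%:E.
Proof.
move=> S0 htau FL2; rewrite /constr_sol.
have -> : feasible P tau F = fun g r => F g /\ (worst_risk P tau g <= r%:E)%E.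
  apply/funext => g; apply/funext => r'; apply/propext.
  by split=> -[Fg hg]; split=> //; apply/worst_risk_leP => //; case: (FL2 g Fg).
by apply: epigraph_argminE => g /FL2; exact: worst_risk_fin_num.
Qed.

End mixture.

Section dual.
Context {d : measure_display} {T : measurableType d} {R : realType}
        (P : probability T R) (S : nat) (tau : 'I_S -> T -> R).
Hypothesis htau : forall s, memL2 P (tau s).

Let mtau s : measurable_fun setT (tau s) := proj1 (htau s).
Let combo_L2 q : memL2 P (combo tau q) := memL2_combo q htau.

Lemma mseR_mixture q g : simplex q -> memL2 P g ->
  \sum_s q s * mseR P g (tau s) =
  mseR P g (combo tau q) + \sum_s q s * mseR P (combo tau q) (tau s).
Proof.
move=> hq hg; have := mse_mixture P mtau hq (proj1 hg).
rewrite mseE //; under eq_bigr do rewrite mseE // -EFinM.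
under [in RHS]eq_bigr do rewrite mseE // -EFinM.
by rewrite !sumEFin -EFinD => -[].
Qed.

Definition dual_value q := \sum_s q s * mseR P (combo tau q) (tau s).

Definition gram u w := fine (\int[P]_x (tau u x * tau w x)%:E).

Lemma mseR0_combo c :
  mseR P (fun=> 0) (combo tau c) = \sum_u \sum_w c u * c w * gram u w.
Proof.
have int_cross u w :
    P.-integrable setT (fun x => (c u * c w * (tau u x * tau w x))%:E).
  by under eq_fun do rewrite EFinM; exact/integrableZl/integrable_mulL2.
rewrite /mseR; suff -> : mse P (fun=> 0) (combo tau c) =
    (\sum_u \sum_w c u * c w * gram u w)%:E by [].
rewrite /mse (eq_integral (fun x =>
  \sum_u \sum_w (c u * c w * (tau u x * tau w x))%:E)%E); last first.
  move=> x _; rewrite sub0r sqrrN expr2 /combo mulr_suml -sumEFin.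
  apply: eq_bigr => u _; rewrite mulr_sumr -sumEFin.
  by apply: eq_bigr => w _; congr EFin; ring.
rewrite integral_sum //; last first.
  by move=> u; apply: integrable_sum => // w _; exact: int_cross.
rewrite -sumEFin; apply: eq_bigr => u _.
rewrite integral_sum // -sumEFin; apply: eq_bigr => w _.
have int_uw := integrable_mulL2 (htau u) (htau w).
under eq_integral do rewrite EFinM.
by rewrite integralZl // /gram [RHS]EFinM fineK ?integrable_fin_num.
Qed.

Lemma mseR0_tau s : mseR P (fun=> 0) (tau s) = gram s s.
Proof.
by rewrite /mseR /mse /gram; congr fine; apply: eq_integral => x _;
  rewrite sub0r sqrrN expr2.
Qed.

Lemma dual_valueE q : simplex q ->
  dual_value q = \sum_s q s * gram s s - \sum_u \sum_w q u * q w * gram u w.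
Proof.
move=> hq; have mix := mseR_mixture hq (memL2_cst P 0).
have {}mix : \sum_s q s * gram s s =
    \sum_u \sum_w q u * q w * gram u w + dual_value q.
  by rewrite -mseR0_combo -mix; apply: eq_bigr => s _; rewrite mseR0_tau.
by rewrite mix addrC addKr.
Qed.

Lemma exists_dual_argmax : (0 < S)%N ->
  exists2 q, simplex q & forall p, simplex p -> dual_value p <= dual_value q.
Proof.
move=> S0.
pose h (v : 'I_S -> R) :=
  \sum_s v s * gram s s - \sum_u \sum_w v u * v w * gram u w.
have coord i : continuous (fun v : 'rV[R]_S => v ord0 i) by exact: coord_continuous.
have lin : continuous (fun v : 'rV[R]_S => \sum_s v ord0 s * gram s s).
  by apply: continuous_sum => s x; exact: cvgMl (coord s x).
have quad : continuous (fun v : 'rV[R]_S =>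
    \sum_u \sum_w v ord0 u * v ord0 w * gram u w).
  apply: continuous_sum => u; apply: continuous_sum => w x.
  exact: cvgMl (continuousM (coord u x) (coord w x)).
have [|q hq qmax] := @simplex_argmax R S h S0.
  by move=> v; exact: cvgB (lin v) (quad v).
by exists q => // p hp; rewrite !dual_valueE //; exact: qmax.
Qed.

Lemma mseR_combo_move_mass q e s t :
  mseR P (combo tau q) (combo tau (move_mass q e s t)) =
  e ^+ 2 * mseR P (tau s) (tau t).
Proof.
rewrite /mseR /mse; under eq_integral => x _.
  rewrite /combo sum_move_mass_mul.
  rewrite (_ : _ ^+ 2 = e ^+ 2 * (tau s x - tau t x) ^+ 2); last by ring.
  rewrite EFinM; over.
rewrite ge0_integralZl_EFin ?sqr_ge0 //; last exact: measurable_sqrB.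
  by rewrite fineM // -/(mse P _ _) mse_fin_num.
by move=> x _; rewrite lee_fin sqr_ge0.
Qed.

Lemma dual_value_move_mass q e s t : simplex q -> simplex (move_mass q e s t) ->
  dual_value (move_mass q e s t) = dual_value q
    + e * (mseR P (combo tau q) (tau t) - mseR P (combo tau q) (tau s))
    - e ^+ 2 * mseR P (tau s) (tau t).
Proof.
move=> hq hq'; have := mseR_mixture hq' (combo_L2 q).
rewrite mseR_combo_move_mass sum_move_mass_mul -/(dual_value q).
by rewrite -/(dual_value _); lra.
Qed.

Lemma dual_argmax_active q : simplex q ->
  (forall p, simplex p -> dual_value p <= dual_value q) ->
  forall s t, 0 < q s ->
  mseR P (combo tau q) (tau t) <= mseR P (combo tau q) (tau s).
Proof.
move=> hq qmax s t qs; set D := fun u => mseR P (combo tau q) (tau u).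
rewrite -/(D t) -/(D s) leNgt; apply/negP => DsDt.
set N := mseR P (tau s) (tau t); have N0 : 0 <= N := mseR_ge0 _ _ _.
(* e is small enough for the first-order gain e (D t - D s) of moving mass e
   from s to t to beat the second-order loss e^2 N *)
set e := Num.min (q s) ((D t - D s) / (N + 1)).
have e0 : 0 < e by rewrite lt_min qs divr_gt0 ?subr_gt0 ?ltr_wpDl.
have e_qs : e <= q s by rewrite ge_min lexx.
have eN : e * (N + 1) <= D t - D s.
  by rewrite -ler_pdivlMr ?ltr_wpDl // ge_min lexx orbT.
have hq' := simplex_move_mass t hq (ltW e0) e_qs.
have := qmax _ hq'; rewrite dual_value_move_mass // -/(D t) -/(D s) -/N.
have := mulr_gt0 e0 e0; nra.
Qed.

Lemma exists_kkt_weights : (0 < S)%N -> exists q r, [/\ simplex q,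
  forall s, mseR P (combo tau q) (tau s) <= r &
  forall s, q s * (mseR P (combo tau q) (tau s) - r) = 0].
Proof.
move=> S0; have [q hq qmax] := exists_dual_argmax S0.
have [s0 qs0] := simplex_exists_pos hq.
have active := dual_argmax_active hq qmax.
exists q, (mseR P (combo tau q) (tau s0)); split=> // [t|u]; first exact: active.
have [->|qu] := eqVneq (q u) 0; first by rewrite mul0r.
have {}qu : 0 < q u by rewrite lt_neqAle eq_sym qu (proj1 hq).
suff -> : mseR P (combo tau q) (tau u) = mseR P (combo tau q) (tau s0).
  by rewrite subrr mulr0.
by apply/le_anti; rewrite active // active.
Qed.

Section kkt.
Variables (q : 'I_S -> R) (r : R).
Hypotheses (hq : simplex q)
  (slack : forall s, q s * (mseR P (combo tau q) (tau s) - r) = 0).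

Lemma kkt_lower_bound g r' : memL2 P g -> (forall s, mseR P g (tau s) <= r') ->
  mseR P g (combo tau q) + r <= r'.
Proof.
move=> hg le_r'; rewrite -(simplex_slack_sum hq slack) -mseR_mixture //.
rewrite -[r']mul1r -(proj2 hq) mulr_suml.
by apply: ler_sum => s _; apply: ler_wpM2l; [exact: (proj1 hq) | exact: le_r'].
Qed.

Variable F : set (T -> R).
Hypotheses (FL2 : forall f, F f -> memL2 P f) (Fq : F (combo tau q))
  (feas : forall s, mseR P (combo tau q) (tau s) <= r).

Lemma kkt_constr_sol : constr_sol P tau F (combo tau q) r.
Proof.
split; first by split=> // s; rewrite mseE // lee_fin.
move=> g r' [Fg le_r']; have hg := FL2 Fg.
have le_r's s : mseR P g (tau s) <= r' by rewrite -lee_fin -mseE.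
by have := kkt_lower_bound hg le_r's; have := mseR_ge0 P g (combo tau q); lra.
Qed.

Lemma kkt_constr_sol_unique f r0 : constr_sol P tau F f r0 ->
  r0 = r /\ {ae P, forall x, f x = combo tau q x}.
Proof.
move=> [[Ff le_r0] r0min]; have [feas_q rmin] := kkt_constr_sol.
have hf := FL2 Ff; have r0r : r0 = r.
  by apply/le_anti; rewrite (r0min _ _ feas_q) (rmin f r0).
split=> //; apply: mse_eq0_ae; [exact: (proj1 hf) | exact: measurable_combo |].
have le_r s : mseR P f (tau s) <= r by rewrite -lee_fin -mseE // -r0r.
rewrite mseE //; congr EFin; apply/le_anti; rewrite mseR_ge0 andbT.
by have := kkt_lower_bound hf le_r; lra.
Qed.

End kkt.

End dual.

Theorem proposition1 (d : measure_display) (T : measurableType d) (R : realType)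
    (P : probability T R) (S : nat) (hS : (0 < S)%N)
    (tau : 'I_S -> T -> R) (htau : forall s, memL2 P (tau s))
    (F : set (T -> R)) (hFL2 : forall f, F f -> memL2 P f)
    (hF : forall q, simplex q -> F (combo tau q)) :
  (* the inner maximum reduces to the maximum over the sites *)
  (forall f, F f ->
     worst_risk P tau f = (\big[Order.max/-oo]_(s < S) mse P f (tau s))%E) /\
  (* equivalence of the two problems *)
  (forall f r, constr_sol P tau F f r <->
     (minimax_sol P tau F f /\ worst_risk P tau f = r%:E)) /\
  (* existence *)
  (exists f r, constr_sol P tau F f r) /\
  (* characterization of the solution *)
  (forall f r, constr_sol P tau F f r ->
     exists q : 'I_S -> R,
       {ae P, forall x, f x = combo tau q x} /\
       (forall s, ((q s)%:E * (mse P f (tau s) - r%:E) = 0)%E) /\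
       (forall s, (mse P f (tau s) <= r%:E)%E) /\
       \sum_(s < S) q s = 1 /\ (forall s, 0 <= q s)).
Proof.
have mtau s : measurable_fun setT (tau s) by case: (htau s).
have [q [r [hq feas slack]]] := exists_kkt_weights htau hS.
have Fq := hF q hq.
split; first by move=> f /hFL2 [mf _]; exact: worst_riskE.
split; first by move=> f r0; exact: constr_solE.
have sol := kkt_constr_sol htau hq slack hFL2 Fq feas.
split; first by exists (combo tau q), r.
move=> f r0 solf; have [[Ff le_r0] _] := solf.
have [r0r fq_ae] := kkt_constr_sol_unique htau hq slack hFL2 Fq feas solf.
subst r0.
have mse_f s : mse P f (tau s) = (mseR P (combo tau q) (tau s))%:E.
  have mf := proj1 (hFL2 f Ff).
  rewrite (mse_ae_eql mf (measurable_combo mtau q) (mtau s) fq_ae) mseE //.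
  exact: memL2_combo.
exists q; split=> //; split.
  by move=> s; rewrite mse_f -EFinB -EFinM slack.
by have [q0 q1] := hq.
Qed.
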